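(* Assume $\xi>0$ and $K=1$. Then $\mathcal M^{N,1}_{\tilde J=0}(M_1,M_2)$ is the closure of $\mathring{\mathcal M}^{N,1}(M_1,M_2)$ in $\mathcal M^{N,1}(M_1,M_2)$.
   Context: Fix integers $N,M_1,M_2\ge0$ and $\xi>0$. $\mathcal M^{N,1}(M_1,M_2)$ is the space of tuples $(X,Y,I,J,\tilde X,\tilde Y,\tilde I,\tilde J,S)$ with $X,Y\in\mathrm{End}(\mathbb C^{M_1})$, $I\in\mathrm{Hom}(\mathbb C^N,\mathbb C^{M_1})$, $J\in\mathrm{Hom}(\mathbb C^{M_1},\mathbb C^N)$, $\tilde X,\tilde Y\in\mathrm{End}(\mathbb C^{M_2})$, $\tilde I\in\mathrm{Hom}(\mathbb C,\mathbb C^{M_2})$, $\tilde J\in\mathrm{Hom}(\mathbb C^{M_2},\mathbb C)$, $S\in\mathrm{Hom}(\mathbb C^{M_1},\mathbb C^{M_2})$ satisfying $[X,Y]+IJ=0$, $[\tilde X,\tilde Y]+\tilde I\tilde J=0$ and stability $\mathbb C\langle X,Y\rangle\mathrm{Im}(I)=\mathbb C^{M_1}$, $\mathbb C\langle\tilde X,\tilde Y\rangle(\mathrm{Im}\tilde I+\mathrm{Im}S)=\mathbb C^{M_2}$, modulo $GL_{M_1}\times GL_{M_2}$ acting by $(g,h)$: $X\mapsto gXg^{-1}$, $Y\mapsto gYg^{-1}$, $I\mapsto gI$, $J\mapsto Jg^{-1}$, similarly for tilded maps with $h$, $S\mapsto hSg^{-1}$. $\mathring{\mathcal M}^{N,1}(M_1,M_2)$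 is the open subvariety defined by $\mathbb C\langle\tilde X,\tilde Y\rangle\mathrm{Im}(\tilde I)=\mathbb C^{M_2}$, and $\mathcal M^{N,1}_{\tilde J=0}(M_1,M_2)$ is the closed subvariety defined by $\tilde J=0$. *)

From HB Require Import structures.
From mathcomp Require Import all_boot all_algebra complex.
From mathcomp Require Import reals.
Set Implicit Arguments. Unset Strict Implicit. Unset Printing Implicit Defensive.
Import GRing.Theory.
Local Open Scope ring_scope.

Section Quiver.
Variables (F : fieldType) (N M1 M2 : nat).

(* A point (X,Y,I,J,X~,Y~,I~,J~,S) of the affine space of data.
   Linear maps C^a -> C^b are b x a matrices acting on column vectors. *)
Record qdata := QData {
  qX : 'M[F]_M1; qY : 'M[F]_M1;
  qI : 'M[F]_(M1, N); qJ : 'M[F]_(N, M1);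
  qXt : 'M[F]_M2; qYt : 'M[F]_M2;
  qIt : 'M[F]_(M2, 1); qJt : 'M[F]_(1, M2);
  qS : 'M[F]_(M2, M1) }.

(* C<A,B> Im(V) = whole space: the only subspace (of column vectors) that
   contains the column space of V and is stable under A and B is everything.
   Subspaces of column vectors are encoded, mxalgebra-style, as row spaces of
   transposes: a column vector v lies in W iff v^T is in the row space of W,
   and A v = (v^T A^T)^T. *)
Definition generates (m k : nat) (A B : 'M[F]_m) (V : 'M[F]_(m, k)) : Prop :=
  forall W : 'M[F]_m,
    (V^T <= W)%MS -> (W *m A^T <= W)%MS -> (W *m B^T <= W)%MS -> row_full W.

Definition moment_eqs (x : qdata) : Prop :=
  qX x *m qY x - qY x *m qX x + qI x *m qJ x = 0 /\
  qXt x *m qYt x - qYt x *m qXt x + qIt x *m qJt x = 0.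

(* stability: C<X,Y> Im I = C^M1 and C<X~,Y~>(Im I~ + Im S) = C^M2 *)
Definition stable_cond (x : qdata) : Prop :=
  generates (qX x) (qY x) (qI x) /\
  generates (qXt x) (qYt x) (row_mx (qIt x) (qS x)).

(* points of the stable locus whose orbits form M^{N,1}(M1,M2) *)
Definition Mpoint (x : qdata) : Prop := moment_eqs x /\ stable_cond x.

Definition open_cond (x : qdata) : Prop := generates (qXt x) (qYt x) (qIt x).

Definition act (g : 'M[F]_M1) (h : 'M[F]_M2) (x : qdata) : qdata :=
  QData (g *m qX x *m invmx g) (g *m qY x *m invmx g)
        (g *m qI x) (qJ x *m invmx g)
        (h *m qXt x *m invmx h) (h *m qYt x *m invmx h)
        (h *m qIt x) (qJt x *m invmx h)
        (h *m qS x *m invmx g).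

Inductive polyfun : (qdata -> F) -> Prop :=
  | pf_const (c : F) : polyfun (fun _ => c)
  | pf_X i j : polyfun (fun x => qX x i j)
  | pf_Y i j : polyfun (fun x => qY x i j)
  | pf_I i j : polyfun (fun x => qI x i j)
  | pf_J i j : polyfun (fun x => qJ x i j)
  | pf_Xt i j : polyfun (fun x => qXt x i j)
  | pf_Yt i j : polyfun (fun x => qYt x i j)
  | pf_It i j : polyfun (fun x => qIt x i j)
  | pf_Jt i j : polyfun (fun x => qJt x i j)
  | pf_S i j : polyfun (fun x => qS x i j)
  | pf_add f g : polyfun f -> polyfun g -> polyfun (fun x => f x + g x)
  | pf_mul f g : polyfun f -> polyfun g -> polyfun (fun x => f x * g x).

Definition rel_closed (Z : qdata -> Prop) : Prop :=
  exists P : (qdata -> F) -> Prop,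
    (forall f, P f -> polyfun f) /\
    (forall y, Mpoint y -> (Z y <-> forall f, P f -> f y = 0)).

Definition saturated (Z : qdata -> Prop) : Prop :=
  forall y g h, Mpoint y -> g \in unitmx -> h \in unitmx -> Z y -> Z (act g h y).

(* Closure in the quotient M = Mpoint / (GL_M1 x GL_M2) with its quotient
   topology: closed subsets of M correspond to saturated relatively closed
   subsets of the stable locus. x lies in (the orbit belonging to) the
   closure of U iff it lies in every such set containing U. *)
Definition in_closureM (U : qdata -> Prop) (x : qdata) : Prop :=
  forall Z, saturated Z -> rel_closed Z ->
    (forall y, Mpoint y -> U y -> Z y) -> Z x.

End Quiver.

From HB Require Import structures.
From mathcomp Require Import all_boot all_algebra complex.
From mathcomp Require Import reals zify.
Set Implicit Arguments. Unset Strict Implicit. Unset Printing Implicit Defensive.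
Import GRing.Theory Num.Theory.
Local Open Scope ring_scope.

(* On the open locus, (X~, Y~, I~, J~) is a stable ADHM datum with
   one-dimensional framing, so J~ = 0 by the classical argument: the identity
   tr(X^a Y^b [Y, X]) = J X^a Y^b I, applied by induction on the length of
   words, kills every J w(X, Y) I, and stability turns this into J = 0.  Being
   closed and orbit-invariant, J~ = 0 then holds on the closure.
   Conversely, if J~ = 0 then X~ and Y~ commute.  Every matrix over an
   algebraically closed field of characteristic 0 commutes with a cyclic matrix
   B: split off generalized eigenspaces and Jordan chains, and shift the cyclic
   pieces until their spectra are disjoint.  Moving Y~ linearly to B and I~ to
   a cyclic vector of B preserves the moment equations and enters the open
   locus wherever a Krylov determinant, a polynomial in the parameter that is
   nonzero at the end point, does not vanish.  So every polynomial vanishing on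
   the open locus vanishes along the line, in particular at its start. *)

Definition krylov (R : pzSemiRingType) n e (x : 'rV[R]_n) (b : 'M[R]_n) : 'M[R]_(e, n) :=
  \matrix_(i < e) (x *m b ^+ i).

Lemma map_krylov (R S : pzSemiRingType) (f : {rmorphism R -> S}) n e (x : 'rV[R]_n) b :
  map_mx f (krylov e x b) = krylov e (map_mx f x) (map_mx f b).
Proof.
apply/row_matrixP => i; rewrite -map_row !rowK map_mxM; congr (_ *m _).
elim: (nat_of_ord i) => [|k IHk]; first by rewrite !expr0 map_mx1.
by rewrite !exprSr -!mulmxE map_mxM IHk.
Qed.

Section CyclicVectors.
Variable F : fieldType.

Definition cyclic_vec n (b : 'M[F]_n) (x : 'rV_n) :=
  forall k (S : 'M_(k, n)), (x <= S)%MS -> stablemx S b -> row_full S.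

Lemma krylov_sub n e (x : 'rV[F]_n) b k (S : 'M_(k, n)) :
  (x <= S)%MS -> stablemx S b -> (krylov e x b <= S)%MS.
Proof.
move=> xS Sb; apply/row_subP => i; rewrite rowK.
elim: (nat_of_ord i) => [|j IHj]; first by rewrite expr0 mulmx1.
by rewrite exprSr -mulmxE mulmxA (submx_trans (submxMr b IHj)).
Qed.

Lemma krylov_full_cyclic n e (x : 'rV[F]_n) b :
  row_full (krylov e x b) -> cyclic_vec b x.
Proof.
move=> fK k S xS Sb.
by rewrite -sub1mx (submx_trans _ (krylov_sub e xS Sb)) ?sub1mx.
Qed.

Lemma horner_mx_coef n (b : 'M[F]_n.+1) p :
  horner_mx b p = \sum_(i < size p) p`_i *: b ^+ i.
Proof.
rewrite -{1}[p]coefK poly_def linear_sum /=; apply: eq_bigr => i _.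
by rewrite linearZ /= rmorphXn /= horner_mx_X.
Qed.

(* Cayley-Hamilton: [x b^n] is a combination of the earlier rows. *)
Lemma krylov_stable n (x : 'rV[F]_n) b : stablemx (krylov n x b) b.
Proof.
case: n x b => [|n] x b; first by rewrite thinmx0 sub0mx.
have rowP i : (i <= n)%N -> (x *m b ^+ i <= krylov n.+1 x b)%MS.
  by rewrite -ltnS => lt_in; apply: (eq_row_sub (Ordinal lt_in)); rewrite rowK.
have CH : b ^+ n.+1 = - \sum_(i < n.+1) (char_poly b)`_i *: b ^+ i.
  have := Cayley_Hamilton b; rewrite horner_mx_coef size_char_poly big_ord_recr /=.
  have /monicP := char_poly_monic b; rewrite lead_coefE size_char_poly => ->.
  by rewrite scale1r => /eqP; rewrite addrC addr_eq0 => /eqP.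
apply/row_subP => i; rewrite row_mul rowK -mulmxA mulmxE -exprSr.
have [lt_in|] := ltnP i n; first exact: rowP.
move=> le_ni; have -> : nat_of_ord i = n by apply/eqP; rewrite eqn_leq le_ni -ltnS ltn_ord.
rewrite CH mulmxN eqmx_opp mulmx_sumr summx_sub // => j _.
by rewrite -scalemxAr scalemx_sub // rowP // -ltnS.
Qed.

Lemma cyclic_vec_krylov n (x : 'rV[F]_n) b :
  cyclic_vec b x -> row_full (krylov n x b).
Proof.
move=> /(_ _ (krylov n x b)); apply; last exact: krylov_stable.
case: n x b => [|n] x b; first by rewrite thinmx0 sub0mx.
by apply: (eq_row_sub 0); rewrite rowK expr0 mulmx1.
Qed.

Lemma cyclic_vec_shift n (b : 'M[F]_n) x c : cyclic_vec b x -> cyclic_vec (b + c%:M) x.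
Proof.
move=> bx k S xS Sbc; apply: bx xS _.
by rewrite -[b](addrK c%:M) stablemxD ?stablemxN ?stablemxC.
Qed.

(* The vectors [y] with [y E] in [S] form a [b1]-stable space containing [x1]. *)
Lemma cyclic_vec_intertwine r n (E : 'M[F]_(r, n)) b b1 x1 k (S : 'M_(k, n)) :
  row_free E -> E *m b = b1 *m E -> cyclic_vec b1 x1 ->
  (x1 *m E <= S)%MS -> stablemx S b -> (E <= S)%MS.
Proof.
move=> freeE Eb b1x1 x1S Sb.
pose S1 := ((S :&: E)%MS *m pinvmx E).
have S1E y : (y <= S1)%MS = (y *m E <= S)%MS.
  apply/idP/idP => [yS1|yS].
    by apply: submx_trans (submxMr E yS1) _; rewrite mulmxKpV ?capmxSr ?capmxSl.
  by rewrite -[y](mulmxKp freeE) submxMr // sub_capmx yS submxMl.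
have fullS1 : row_full S1.
  apply: b1x1; first by rewrite S1E.
  apply/row_subP => i; rewrite row_mul S1E -mulmxA -Eb mulmxA.
  by apply: submx_trans Sb; rewrite submxMr // -S1E row_sub.
by apply/row_subP => i; rewrite rowE -S1E submx_full.
Qed.

Lemma horner_mx_block r1 r2 (b1 : 'M[F]_r1.+1) (b2 : 'M[F]_r2.+1) p :
  horner_mx (block_mx b1 0 0 b2) p = block_mx (horner_mx b1 p) 0 0 (horner_mx b2 p).
Proof.
elim/poly_ind: p => [|p c IHp]; first by rewrite !rmorph0 block_mx0.
rewrite !rmorphD !rmorphM /= !horner_mx_X !horner_mx_C IHp.
rewrite -[_ * _]/(mulmx _ _) (@mulmx_block _ r1.+1 r2.+1 r1.+1 r2.+1 r1.+1 r2.+1).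
rewrite !mulmx0 !mul0mx !addr0 !add0r (@scalar_mx_block _ r1.+1 r2.+1).
by rewrite (@add_block_mx _ r1.+1 r2.+1 r1.+1 r2.+1) !addr0.
Qed.

(* A Bezout identity for the characteristic polynomials gives the two
   projections as polynomials in the block matrix. *)
Lemma cyclic_vec_block r1 r2 (b1 : 'M[F]_r1.+1) (b2 : 'M[F]_r2.+1) x1 x2 :
  coprimep (char_poly b1) (char_poly b2) -> cyclic_vec b1 x1 -> cyclic_vec b2 x2 ->
  cyclic_vec (block_mx b1 0 0 b2) (row_mx x1 x2).
Proof.
move=> /Bezout_eq1_coprimepP [[u v] /= uv1] b1x1 b2x2 k S xS Sb.
have stableS p : stablemx S (horner_mx (block_mx b1 0 0 b2) p).
  by rewrite -(eqmx_stable _ (genmxE S)) horner_mx_stable ?(eqmx_stable _ (genmxE S)).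
have hornerS p : (row_mx (x1 *m horner_mx b1 p) (x2 *m horner_mx b2 p) <= S)%MS.
  have := submx_trans (submxMr _ xS) (stableS p).
  rewrite horner_mx_block (@mul_row_block _ 1 r1.+1 r2.+1 r1.+1 r2.+1).
  by rewrite !mulmx0 addr0 add0r.
have CH1 := Cayley_Hamilton b1; have CH2 := Cayley_Hamilton b2.
have e1 : horner_mx b1 (v * char_poly b2) = 1 /\ horner_mx b2 (v * char_poly b2) = 0.
  split; last by rewrite rmorphM /= CH2 mulr0.
  have -> : v * char_poly b2 = 1 - u * char_poly b1 by rewrite -uv1 addrC addKr.
  by rewrite rmorphB rmorphM /= CH1 mulr0 subr0 rmorph1.
have e2 : horner_mx b1 (u * char_poly b1) = 0 /\ horner_mx b2 (u * char_poly b1) = 1.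
  split; first by rewrite rmorphM /= CH1 mulr0.
  have -> : u * char_poly b1 = 1 - v * char_poly b2 by rewrite -uv1 addrK.
  by rewrite rmorphB rmorphM /= CH2 mulr0 subr0 rmorph1.
have E1S : (row_mx 1%:M 0 <= S)%MS.
  apply: (cyclic_vec_intertwine _ _ b1x1 _ Sb).
  - by rewrite /row_free rank_row_mx0 mxrank1.
  - by rewrite mul_row_block mul_mx_row !mulmx0 !mul0mx addr0 add0r mulmx1 mul1mx.
  - have := hornerS (v * char_poly b2).
    by rewrite e1.1 e1.2 mulmx1 mulmx0 mul_mx_row mulmx1 mulmx0.
have E2S : (row_mx 0 1%:M <= S)%MS.
  apply: (cyclic_vec_intertwine _ _ b2x2 _ Sb).
  - by rewrite /row_free rank_row_0mx mxrank1.
  - by rewrite mul_row_block mul_mx_row !mulmx0 !mul0mx addr0 add0r mulmx1 mul1mx.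
  - have := hornerS (u * char_poly b1).
    by rewrite e2.1 e2.2 mulmx1 mulmx0 mul_mx_row mulmx1 mulmx0.
by rewrite -sub1mx scalar_mx_block block_mxEv col_mx_sub E1S E2S.
Qed.

Lemma hankel_row_free e (T : 'M[F]_e) :
  (forall i k : 'I_e, (e <= i + k)%N -> T i k = 0) ->
  (forall i k : 'I_e, (i + k).+1 = e -> T i k != 0) -> row_free T.
Proof.
move=> T0 T1; apply: inj_row_free => c cT0.
suff c0 n (j : 'I_e) : (j < n)%N -> c 0 j = 0 by apply/rowP => j; rewrite mxE (c0 e).
elim: n j => // n IHn j; rewrite ltnS leq_eqVlt => /orP [/eqP jn | /IHn //].
have lt_k : (e - j.+1 < e)%N by rewrite ltn_subrL (leq_ltn_trans _ (ltn_ord j)).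
move/matrixP/(_ 0 (Ordinal lt_k))/eqP: cT0.
rewrite !mxE (bigD1 j) //= big1 => [|i neq_ij]; last first.
  have [lt_ij|le_ji] := ltnP i j; first by rewrite IHn ?mul0r // -jn.
  have ne_ij : (i : nat) <> j by move=> eq_ij; case/eqP: neq_ij; apply: val_inj.
  by rewrite T0 ?mulr0 //=; have := ltn_ord j; lia.
have Tjk : T j (Ordinal lt_k) != 0 by apply: T1 => /=; have := ltn_ord j; lia.
by rewrite addr0 mulf_eq0 (negPf Tjk) orbF => /eqP.
Qed.

Lemma nonzero_entry m n (A : 'M[F]_(m, n)) : A != 0 ->
  exists (u : 'rV_m) (phi : 'cV_n), (u *m A *m phi) 0 0 != 0.
Proof.
move=> A0; have [[i j] /= Aij | all0] := pickP (fun ij : 'I_m * 'I_n => A ij.1 ij.2 != 0).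
  by exists (delta_mx 0 i), (delta_mx j 0); rewrite -rowE -colE !mxE.
case/eqP: A0; apply/matrixP => i j; have := all0 (i, j).
by rewrite mxE /= => /negbFE/eqP.
Qed.

(* A longest Jordan chain of a nilpotent matrix has an invariant complement:
   the common kernel of the functionals [N^k phi] dual to the chain. *)
Lemma nilpotent_krylov_complement n (N : 'M[F]_n) e :
  N ^+ e = 0 -> N ^+ e.-1 != 0 ->
  exists (u : 'rV_n) (W : 'M_n), [/\ row_free (krylov e u N),
    (krylov e u N :&: W = 0)%MS, stablemx W N & (n <= e + \rank W)%N].
Proof.
move=> Ne /nonzero_entry [u [phi uNphi]].
pose K := krylov e u N; pose Phi := \matrix_(r < n, k < e) (N ^+ k *m phi) r 0.
have PhiE (v : 'rV_n) k : (v *m Phi) 0 k = (v *m N ^+ k *m phi) 0 0.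
  by rewrite -mulmxA !mxE; apply: eq_bigr => r _; rewrite mxE.
have N0 k : (e <= k)%N -> N ^+ k = 0.
  by move=> le_ek; rewrite -(subnKC le_ek) exprD Ne mul0r.
have KPhiE (a k : 'I_e) : (K *m Phi) a k = (u *m N ^+ (a + k) *m phi) 0 0.
  transitivity ((row a (K *m Phi)) 0 k); first by rewrite [RHS]mxE.
  by rewrite row_mul rowK PhiE -(mulmxA u) mulmxE -exprD.
have freeKPhi : row_free (K *m Phi).
  apply: hankel_row_free => a k hak; rewrite KPhiE.
    by rewrite N0 // mulmx0 mul0mx mxE.
  by move/(f_equal predn): hak => /= ->.
exists u, (kermx Phi); split.
- by rewrite /row_free eqn_leq rank_leq_row -{1}(eqP freeKPhi) mxrankM_maxl.
- apply/eqP/rowV0P => v; rewrite sub_capmx => /andP [/submxP [c ->] /sub_kermxP].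
  by rewrite -mulmxA -(mul0mx _ (K *m Phi)) => /(row_free_inj freeKPhi) ->; rewrite mul0mx.
- apply/row_subP => r; rewrite row_mul; apply/sub_kermxP/rowP => k.
  set v := row r (kermx Phi).
  have vPhi (k' : 'I_e) : (v *m N ^+ k' *m phi) 0 0 = 0.
    by rewrite -PhiE -row_mul mulmx_ker row0 mxE.
  rewrite PhiE [RHS]mxE -(mulmxA v) mulmxE -exprS; have [lt_ke|le_ek] := ltnP k.+1 e.
    exact: (vPhi (Ordinal lt_ke)).
  by rewrite N0 // mulmx0 mul0mx mxE.
- by rewrite mxrank_ker; have := rank_leq_col Phi; lia.
Qed.

Lemma krylov_stable_nil n e (x : 'rV[F]_n) N : N ^+ e = 0 -> stablemx (krylov e x N) N.
Proof.
move=> Ne; apply/row_subP => i; rewrite row_mul rowK -mulmxA mulmxE -exprSr.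
have [lt_ie|le_ei] := ltnP i.+1 e.
  by apply: (eq_row_sub (Ordinal lt_ie)); rewrite rowK.
by rewrite -(subnKC le_ei) exprD Ne mul0r mulmx0 sub0mx.
Qed.

Definition decomposable n (a : 'M[F]_n) :=
  exists m1 m2 (U : 'M_(m1, n)) (W : 'M_(m2, n)),
    [/\ stablemx U a, stablemx W a, (U :&: W = 0)%MS,
        (\rank U + \rank W)%N = n & (0 < \rank U)%N && (0 < \rank W)%N].

Lemma nilpotent_decomposable_or_cyclic n (N : 'M[F]_n.+1) m :
  N ^+ m = 0 -> decomposable N \/ exists x, cyclic_vec N x.
Proof.
move=> Nm; have /ex_minnP [e /eqP Ne minE] : exists e, N ^+ e == 0 by exists m; rewrite Nm.
have e0 : (0 < e)%N by case: e Ne {minE} => // /eqP; rewrite expr0 oner_eq0.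
have Ne1 : N ^+ e.-1 != 0 by apply/negP => /minE; lia.
have [u [W [freeK KW WN rkW]]] := nilpotent_krylov_complement Ne Ne1.
have rkK : \rank (krylov e u N) = e by apply/eqP.
have [W0|Wpos] := posnP (\rank W).
  right; exists u; apply: (krylov_full_cyclic (e := e)).
  by rewrite /row_full eqn_leq rank_leq_col (eqP freeK) -(addn0 e) -W0.
left; exists e, n.+1, (krylov e u N), W; split => //; first exact: krylov_stable_nil.
  have rkKW : \rank (krylov e u N + W)%MS = (e + \rank W)%N.
    by rewrite mxrank_disjoint_sum // rkK.
  by rewrite rkK; apply/eqP; rewrite eqn_leq rkW andbT -rkKW rank_leq_col.
by rewrite rkK e0 Wpos.
Qed.

Definition cyclic_centralizer n (a : 'M[F]_n) :=
  exists b x, a *m b = b *m a /\ cyclic_vec b x.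

Lemma cyclic_centralizer_similar r n (Q : 'M[F]_(r, n)) a A :
  row_free Q -> row_full Q -> Q *m a = A *m Q ->
  cyclic_centralizer A -> cyclic_centralizer a.
Proof.
move=> freeQ fullQ QaAQ [c [x [Ac cx]]].
move: (pinvmx Q) (mulVpmx fullQ) (mulmxVp freeQ) => P PQ QP.
have aE : a = P *m A *m Q by rewrite -mulmxA -QaAQ mulmxA PQ mul1mx.
exists (P *m c *m Q), (x *m Q); split.
  by rewrite aE -!mulmxA !(mulmxA Q P) QP !mul1mx (mulmxA A) Ac -mulmxA.
move=> k S xQS Sb.
have QS : (Q <= S)%MS.
  by apply: (cyclic_vec_intertwine freeQ _ cx xQS Sb); rewrite !mulmxA QP mul1mx.
by rewrite -sub1mx (submx_trans _ QS) ?sub1mx.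
Qed.

End CyclicVectors.

Section InfiniteField.
Variable F : numDomainType.

Lemma uniq_natr n : uniq [seq (i%:R : F) | i <- iota 0 n].
Proof. by rewrite map_inj_uniq ?iota_uniq // => i j /eqP; rewrite eqr_nat => /eqP. Qed.

Lemma exists_notin (s : seq F) : exists c, c \notin s.
Proof.
have [/allP sub_s|] := boolP (all (mem s) [seq (i%:R : F) | i <- iota 0 (size s).+1]).
  by have := uniq_leq_size (uniq_natr _) sub_s; rewrite size_map size_iota ltnn.
by rewrite -has_predC => /hasP [c _ cs]; exists c.
Qed.

Lemma poly_eq0_outside_roots (p q : {poly F}) :
  q != 0 -> (forall t, q.[t] != 0 -> p.[t] = 0) -> p = 0.
Proof.
move=> q0 pq; suff /eqP : p * q = 0 by rewrite mulf_eq0 (negPf q0) orbF => /eqP.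
apply: (@roots_geq_poly_eq0 _ _ [seq i%:R | i <- iota 0 (size (p * q))]).
- apply/allP => t _; rewrite rootE hornerM.
  by have [->|/pq ->] := eqVneq q.[t] 0; rewrite ?mulr0 ?mul0r.
- exact: uniq_natr.
- by rewrite size_map size_iota.
Qed.

End InfiniteField.

Section ClosedField.
Variable F : numClosedFieldType.

Lemma coprimep_char_poly_shift n (p : {poly F}) (b : 'M[F]_n) :
  p != 0 -> exists c, coprimep p (char_poly (b + c%:M)).
Proof.
have roots (r : {poly F}) : r != 0 -> exists rs : seq F, forall z, root r z -> z \in rs.
  move=> r0; have [rs ers] := closed_field_poly_normal r; exists rs => z.
  by rewrite {1}ers rootZ ?lead_coef_eq0 // root_prod_XsubC.
move=> p0; have [rs rsP] := roots _ p0.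
have [rq rqP] := roots _ (monic_neq0 (char_poly_monic b)).
have [c cnot] := exists_notin [seq z - w | z <- rs, w <- rq].
exists c; rewrite coprimep_def; apply/negPn/negP => /closed_rootP [z].
rewrite root_gcd -eigenvalue_root_char => /andP [/rsP zrs].
have -> : eigenvalue (b + c%:M) z = eigenvalue b (z - c).
  by rewrite /eigenvalue /eigenspace raddfB /= opprB addrA addrAC.
rewrite eigenvalue_root_char => /rqP zcrq.
case/negP: cnot; apply/allpairsP; exists (z, z - c) => /=.
by rewrite zrs zcrq opprB addrC subrK.
Qed.

Lemma cyclic_centralizer_block r1 r2 (a1 : 'M[F]_r1) (a2 : 'M[F]_r2) :
  (0 < r1)%N -> (0 < r2)%N -> cyclic_centralizer a1 -> cyclic_centralizer a2 ->
  cyclic_centralizer (block_mx a1 0 0 a2).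
Proof.
case: r1 a1 => // r1 a1; case: r2 a2 => // r2 a2 _ _.
move=> [b1 [x1 [ab1 b1x1]]] [b2 [x2 [ab2 b2x2]]].
have [c cop] := coprimep_char_poly_shift b2 (monic_neq0 (char_poly_monic b1)).
exists (block_mx b1 0 0 (b2 + c%:M)), (row_mx x1 x2); split.
  by rewrite !mulmx_block !mulmx0 !mul0mx !addr0 !add0r ab1 mulmxDr mulmxDl ab2 scalar_mxC.
exact: cyclic_vec_block cop b1x1 (cyclic_vec_shift b2x2).
Qed.

Lemma cyclic_centralizer_decomposable n (a : 'M[F]_n) :
  (forall m, (m < n)%N -> forall a' : 'M[F]_m, cyclic_centralizer a') ->
  decomposable a -> cyclic_centralizer a.
Proof.
move=> IH [m1 [m2 [U [W [Ua Wa UW rkUW /andP [rU rW]]]]]].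
pose Q := col_mx (row_base U) (row_base W).
have rkQ : \rank Q = n.
  by rewrite -addsmxE (adds_eqmx (eq_row_base U) (eq_row_base W)) mxrank_disjoint_sum.
have QaE : Q *m a = block_mx (restrictmx U a) 0 0 (restrictmx W a) *m Q.
  by rewrite mul_col_mx mul_block_col !mul0mx addr0 add0r !mulmxKpV ?stablemx_row_base.
apply: (cyclic_centralizer_similar _ _ QaE); rewrite ?/row_free ?/row_full ?rkQ ?rkUW //.
by apply: cyclic_centralizer_block => //; apply: IH; lia.
Qed.

Lemma decomposable_or_cyclic n (a : 'M[F]_n.+1) :
  decomposable a \/ exists x, cyclic_vec a x.
Proof.
have [lam lam_root] : exists lam, root (char_poly a) lam.
  by apply/closed_rootP; rewrite size_char_poly.
have [m [q]] := multiplicity_XsubC (char_poly a) lam.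
rewrite monic_neq0 ?char_poly_monic //= => q_lam cpE.
have m0 : (0 < m)%N.
  by case: m cpE => // cpE; move: lam_root; rewrite cpE expr0 mulr1 (negPf q_lam).
pose p := ('X - lam%:P) ^+ m.
have cop : coprimep p q by rewrite coprimep_expl // coprimep_sym coprimep_XsubC.
have full : (kermxpoly a p + kermxpoly a q :=: 1%:M)%MS.
  apply: eqmx_trans (eqmx_sym (kermxpolyM a cop)) (kermxpoly_min _).
  by rewrite mulrC -cpE mxminpoly_dvd_char.
have rk : (\rank (kermxpoly a p) + \rank (kermxpoly a q))%N = n.+1.
  by rewrite -mxrank_disjoint_sum ?mxdirect_kermxpoly // full mxrank1.
have hp : horner_mx a p = (a - lam%:M) ^+ m.
  by rewrite rmorphXn rmorphB /= horner_mx_X horner_mx_C.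
have [rkq0|rkq] := posnP (\rank (kermxpoly a q)).
  have Nm : (a - lam%:M) ^+ m = 0.
    have : row_full (kermxpoly a p) by rewrite /row_full -[X in _ == X]rk rkq0 addn0.
    by rewrite -sub1mx /kermxpoly hp => /sub_kermxP; rewrite mul1mx.
  have aE : a = (a - lam%:M) + lam%:M by rewrite subrK.
  case: (nilpotent_decomposable_or_cyclic Nm)
    => [[m1 [m2 [U [W [UN WN UW rkUW pos]]]]]|[x Nx]].
    by left; exists m1, m2, U, W; split; rewrite // aE stablemxD ?stablemxC.
  by right; exists x; rewrite aE; apply: cyclic_vec_shift.
have rkp : (0 < \rank (kermxpoly a p))%N.
  move: lam_root; rewrite -eigenvalue_root_char /eigenvalue -mxrank_eq0 -lt0n => ev.
  apply: leq_trans ev (mxrankS _); rewrite /kermxpoly hp; apply/sub_kermxP.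
  by rewrite -(prednK m0) exprS -mulmxE mulmxA mulmx_ker mul0mx.
left; exists n.+1, n.+1, (kermxpoly a p), (kermxpoly a q).
by split; rewrite ?comm_mx_stable_kermxpoly ?mxdirect_kermxpoly ?rkp ?rkq.
Qed.

Theorem cyclic_centralizer_all n (a : 'M[F]_n) : cyclic_centralizer a.
Proof.
elim/ltn_ind: n a => -[|n] IH a.
  exists 0, 0; split; first by rewrite mulmx0 mul0mx.
  by move=> k S _ _; rewrite /row_full -leqn0 rank_leq_col.
have [dec|[x ax]] := decomposable_or_cyclic a.
  exact: cyclic_centralizer_decomposable IH dec.
by exists a, x.
Qed.

End ClosedField.

Section Commutators.
Variable R : pzRingType.

Lemma commutator_exprr (u v : R) k :
  u * v ^+ k - v ^+ k * u = \sum_(i < k) v ^+ i * (u * v - v * u) * v ^+ (k.-1 - i).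
Proof.
elim: k => [|k IHk]; first by rewrite !expr0 mulr1 mul1r subrr big_ord0.
rewrite big_ord_recr /= subnn expr0 mulr1.
have -> : \sum_(i < k) v ^+ i * (u * v - v * u) * v ^+ (k - i)
          = (\sum_(i < k) v ^+ i * (u * v - v * u) * v ^+ (k.-1 - i)) * v.
  rewrite mulr_suml; apply: eq_bigr => i _; rewrite -[RHS]mulrA -exprSr.
  by congr (_ * _ ^+ _); have := ltn_ord i; lia.
by rewrite -IHk mulrBl mulrBr !mulrA addrA subrK exprSr !mulrA.
Qed.

Lemma commutator_exprl (u v : R) k :
  u ^+ k * v - v * u ^+ k = \sum_(i < k) u ^+ i * (u * v - v * u) * u ^+ (k.-1 - i).
Proof.
elim: k => [|k IHk]; first by rewrite !expr0 mulr1 mul1r subrr big_ord0.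
rewrite big_ord_recl /= expr0 mul1r subn0.
have -> : \sum_(i < k) u ^+ lift ord0 i * (u * v - v * u) * u ^+ (k - lift ord0 i)
          = u * \sum_(i < k) u ^+ i * (u * v - v * u) * u ^+ (k.-1 - i).
  rewrite mulr_sumr; apply: eq_bigr => i _; rewrite lift0 exprS !mulrA.
  by congr (_ * _ ^+ _); lia.
by rewrite -IHk mulrBr mulrBl !mulrA [RHS]addrC [RHS]addrA subrK exprS !mulrA.
Qed.

End Commutators.

Section StableSpaces.
Variable F : fieldType.

Lemma iter_stable n (f : 'M[F]_n -> 'M[F]_n) S :
  (forall T, (T <= f T)%MS) -> (forall T U, (T <= U)%MS -> (f T <= f U)%MS) ->
  exists k, (f (iter k f S) <= iter k f S)%MS.
Proof.
move=> infl mono.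
have grow k : (f (iter k f S) <= iter k f S)%MS || (k <= \rank (iter k f S))%N.
  elim: k => [|k]; first by rewrite orbT.
  have [fix_k _|nfix_k /= rk_k] := boolP (f (iter k f S) <= iter k f S)%MS.
    by rewrite /= mono.
  have : (iter k f S < f (iter k f S))%MS by rewrite ltmxE infl.
  by rewrite ltmxErank => /andP [_ /(leq_ltn_trans rk_k) ->]; rewrite orbT.
by exists n.+1; have := grow n.+1; rewrite leqNgt ltnS rank_leq_col orbF.
Qed.

End StableSpaces.

Lemma mx11_trace (R : pzRingType) (A : 'M[R]_1) : A = (\tr A)%:M.
Proof. by rewrite {1}[A]mx11_scalar /mxtrace big_ord1. Qed.

Section ADHM.
Variables (F : numFieldType) (m : nat) (X Y : 'M[F]_m).
Variables (I : 'M[F]_(m, 1)) (J : 'M[F]_(1, m)).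
Hypothesis moment : X *m Y - Y *m X + I *m J = 0.

Lemma commutator_YX : Y *m X - X *m Y = I *m J.
Proof. by rewrite -[I *m J](addKr (X *m Y - Y *m X)) moment addr0 opprB. Qed.

Lemma Y_mulXn a :
  Y *m X ^+ a = X ^+ a *m Y + \sum_(i < a) X ^+ i *m I *m J *m X ^+ (a.-1 - i).
Proof.
apply/eqP; rewrite addrC -subr_eq; apply/eqP.
have := commutator_exprr Y X a; rewrite -!mulmxE commutator_YX => ->.
by apply: eq_bigr => i _; rewrite !mulmxA.
Qed.

Lemma Yn_mulX b :
  Y ^+ b *m X = X *m Y ^+ b + \sum_(i < b) Y ^+ i *m I *m J *m Y ^+ (b.-1 - i).
Proof.
apply/eqP; rewrite addrC -subr_eq; apply/eqP.
have := commutator_exprl Y X b; rewrite -!mulmxE commutator_YX => ->.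
by apply: eq_bigr => i _; rewrite !mulmxA.
Qed.

Definition word p a q := J *m Y ^+ p *m X ^+ a *m Y ^+ q *m I.

Section FixedDegree.
Variable d : nat.
Hypothesis lower_words : forall p a q, (p + a + q < d)%N -> word p a q = 0.

Lemma word_shift p a q : (p.+1 + a + q = d)%N -> word p.+1 a q = word p a q.+1.
Proof.
move=> deg; rewrite /word (_ : J *m Y ^+ p.+1 *m X ^+ a = J *m Y ^+ p *m (Y *m X ^+ a)).
  rewrite Y_mulXn mulmxDr !mulmxDl mulmx_sumr !mulmx_suml big1 ?addr0 => [|i _].
    by rewrite exprS -mulmxE !mulmxA.
  rewrite !mulmxA (_ : J *m Y ^+ p *m X ^+ i *m I = 0) ?mul0mx //.
  have := @lower_words p i 0; rewrite /word expr0 mulmx1; apply.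
  by have := ltn_ord i; lia.
by rewrite exprSr -mulmxE !mulmxA.
Qed.

Lemma word_normal p a q : (p + a + q = d)%N -> word p a q = word 0 a (p + q).
Proof.
elim: p q => // p IHp q deg.
by rewrite word_shift // IHp ?addnS //; lia.
Qed.

(* The trace of [X^a Y^b [Y, X]] computed in two ways. *)
Lemma word_trace a b : (a + b = d)%N -> \tr (word 0 a b) = 0.
Proof.
move=> deg; set c := \tr (word 0 a b).
have cE : c = \tr (X ^+ a *m Y ^+ b *m (Y *m X - X *m Y)).
  by rewrite commutator_YX /c /word expr0 mulmx1 -!mulmxA mxtrace_mulC !mulmxA.
have tYX : \tr (X ^+ a *m Y ^+ b *m (Y *m X)) = \tr (X ^+ a.+1 *m Y ^+ b.+1).
  by rewrite exprS exprSr -!mulmxE !mulmxA mxtrace_mulC !mulmxA.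
have tXY : \tr (X ^+ a *m Y ^+ b *m (X *m Y)) = \tr (X ^+ a.+1 *m Y ^+ b.+1) + c *+ b.
  rewrite mulmxA -(mulmxA _ _ X) Yn_mulX mulmxDr mulmxDl mxtraceD.
  rewrite !exprSr -!mulmxE !mulmxA; congr (_ + _).
  rewrite mulmx_sumr mulmx_suml raddf_sum /= -[in RHS](card_ord b) -sumr_const.
  apply: eq_bigr => i _; have lt_ib := ltn_ord i.
  rewrite (_ : _ *m Y = (X ^+ a *m Y ^+ i *m I) *m (J *m Y ^+ (b - i))).
    by rewrite mxtrace_mulC !mulmxA -/(word (b - i) a i) word_normal ?subnK //; lia.
  by rewrite (_ : (b - i = (b.-1 - i).+1)%N) ?exprSr -?mulmxE ?mulmxA //; lia.
have : c *+ b.+1 = 0.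
  by rewrite mulrS {1}cE mulmxBr raddfB /= tYX tXY opprD addrA subrr add0r addNr.
by move/eqP; rewrite mulrn_eq0 => /eqP.
Qed.

End FixedDegree.

Lemma word_eq0 p a q : word p a q = 0.
Proof.
move: {2}(p + a + q)%N (erefl (p + a + q)%N) => d deg.
elim/ltn_ind: d p a q deg => d IH p a q deg.
have lower p' a' q' : (p' + a' + q' < d)%N -> word p' a' q' = 0.
  by move=> lt_d; apply: IH lt_d _ _ _ erefl.
rewrite (word_normal lower deg) [word 0 _ _]mx11_trace (word_trace lower) ?raddf0 //; lia.
Qed.

(* The joint kernel of the functionals [J X^a Y^q] contains [I], by the
   vanishing of all words, and is stable under [X] and [Y]. *)
Lemma moment_generates_J0 : generates X Y I -> J = 0.
Proof.
move=> gen; pose f (S : 'M[F]_m) := (S + S *m X^T + S *m Y^T)%MS.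
have infl S : (S <= f S)%MS by rewrite /f -addsmxA addsmxSl.
have mono S T : (S <= T)%MS -> (f S <= f T)%MS by move=> ST; rewrite /f !addsmxS ?submxMr.
have [k fix_k] := iter_stable <<I^T>>%MS infl mono.
have IS : (I^T <= iter k f <<I^T>>)%MS.
  by elim: k {fix_k} => [|k IHk] /=; [rewrite genmxE | apply: submx_trans IHk (infl _)].
have S_ker a q : (iter k f <<I^T>> <= kermx (J *m X ^+ a *m Y ^+ q)^T)%MS.
  elim: k {fix_k IS} a q => [|k IHk] a q /=.
    rewrite genmxE; apply/sub_kermxP; rewrite -(trmx_mul (J *m X ^+ a *m Y ^+ q) I).
    by have := word_eq0 0 a q; rewrite /word expr0 mulmx1 => ->; rewrite trmx0.
  rewrite !addsmx_sub IHk /=; apply/andP; split; apply/sub_kermxP;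
    rewrite -(mulmxA (iter k f _)) -trmx_mul; apply/sub_kermxP.
    rewrite -(mulmxA (J *m X ^+ a)) Yn_mulX mulmxDr mulmx_sumr big1 ?addr0 => [|i _].
      by rewrite !mulmxA -(mulmxA J) mulmxE -exprSr.
    have := word_eq0 0 a i; rewrite /word expr0 mulmx1 !mulmxA => ->.
    by rewrite !mul0mx.
  by rewrite -(mulmxA (J *m X ^+ a)) mulmxE -exprSr.
have : row_full (iter k f <<I^T>>%MS).
  apply: gen IS _ _; apply: submx_trans fix_k; rewrite /f.
    exact: submx_trans (addsmxSr _ _) (addsmxSl _ _).
  exact: addsmxSr.
rewrite -sub1mx => /submx_trans/(_ (S_ker 0 0))/sub_kermxP.
by rewrite !expr0 !mulmx1 mul1mx => /(congr1 trmx); rewrite trmxK trmx0.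
Qed.

End ADHM.

Section Deformation.
Variables (F : numClosedFieldType) (N M1 M2 : nat).
Implicit Types (x y : qdata F N M1 M2) (B : 'M[F]_M2) (v : 'M[F]_(M2, 1)).

Lemma open_J0 y : Mpoint y -> open_cond y -> qJt y = 0.
Proof. by move=> [[_ moment2] _]; apply: moment_generates_J0 moment2. Qed.

Definition deform x B v (t : F) : qdata F N M1 M2 :=
  QData (qX x) (qY x) (qI x) (qJ x) (qXt x) (qYt x + t *: (B - qYt x))
        (qIt x + t *: (v - qIt x)) (qJt x) (qS x).

Lemma deform0 x B v : deform x B v 0 = x.
Proof. by rewrite /deform !scale0r !addr0; case: x. Qed.

Definition mx_line r s (A D : 'M[F]_(r, s)) : 'M[{poly F}]_(r, s) :=
  map_mx polyC A + 'X *: map_mx polyC D.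

Lemma mx_line_eval r s (A D : 'M[F]_(r, s)) t :
  map_mx (horner_eval t) (mx_line A D) = A + t *: D.
Proof. by apply/matrixP => i j; rewrite !mxE horner_evalE !hornerE. Qed.

Lemma polyfun_deform x B v f :
  polyfun f -> exists p : {poly F}, forall t, f (deform x B v t) = p.[t].
Proof.
elim=> [c|i j|i j|i j|i j|i j|i j|i j|i j|i j|g h _ [p gp] _ [q hq]
       |g h _ [p gp] _ [q hq]] /=;
  try by eexists (polyC _) => t; rewrite hornerC.
- by exists (mx_line (qYt x) (B - qYt x) i j) => t; rewrite -mx_line_eval mxE.
- by exists (mx_line (qIt x) (v - qIt x) i j) => t; rewrite -mx_line_eval mxE.
- by exists (p + q) => t; rewrite hornerD gp hq.
- by exists (p * q) => t; rewrite hornerM gp hq.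
Qed.

Lemma det_krylov_deform x B v : exists p : {poly F}, forall t,
  \det (krylov M2 (qIt (deform x B v t))^T (qYt (deform x B v t))^T) = p.[t].
Proof.
exists (\det (krylov M2 (mx_line (qIt x) (v - qIt x))^T
                       (mx_line (qYt x) (B - qYt x))^T)) => t.
by rewrite -horner_evalE -det_map_mx map_krylov -!map_trmx !mx_line_eval.
Qed.

Lemma deform_open x B v t :
  Mpoint x -> qJt x = 0 -> qXt x *m B = B *m qXt x ->
  row_full (krylov M2 (qIt (deform x B v t))^T (qYt (deform x B v t))^T) ->
  Mpoint (deform x B v t) /\ open_cond (deform x B v t).
Proof.
move=> [[m1 m2] [s1 _]] Jt0 XB fullK.
have XY : qXt x *m qYt x = qYt x *m qXt x.
  by apply/eqP; rewrite -subr_eq0; move: m2; rewrite Jt0 mulmx0 addr0 => ->.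
have opn : open_cond (deform x B v t).
  move=> W IW _ YW; rewrite -sub1mx (submx_trans _ (krylov_sub M2 IW YW)) ?sub1mx //.
split => //; split; split; [exact: m1 | | exact: s1 | ].
  rewrite /= Jt0 mulmx0 addr0 mulmxDr mulmxDl -scalemxAr -scalemxAl mulmxBr mulmxBl.
  by rewrite XY XB subrr.
by move=> W; rewrite tr_row_mx col_mx_sub => /andP [IW _]; apply: opn IW.
Qed.

Lemma closure_J0 x : in_closureM (fun y => open_cond y) x -> qJt x = 0.
Proof.
move=> /(_ (fun y => qJt y = 0)); apply.
- by move=> y g h _ _ _ /= ->; rewrite mul0mx.
- exists (fun f => exists j : 'I_M2, f = fun y => qJt y 0 j); split.
    by move=> f [j ->]; apply: pf_Jt.
  move=> y _; split => [Jt0 f [j ->]|Jf]; first by rewrite Jt0 mxE.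
  by apply/rowP => j; rewrite mxE; apply: (Jf (fun y => qJt y 0 j)); exists j.
- exact: open_J0.
Qed.

Lemma J0_closure x : Mpoint x -> qJt x = 0 -> in_closureM (fun y => open_cond y) x.
Proof.
move=> Mx Jt0 Z _ [P [Ppoly PZ]] ZU.
have [b [u [Xb bu]]] := cyclic_centralizer_all (qXt x)^T.
have XB : qXt x *m b^T = b^T *m qXt x.
  by rewrite -[qXt x]trmxK -!trmx_mul Xb.
have [d dE] := det_krylov_deform x b^T u^T.
have d1 : d.[1] != 0.
  rewrite -dE /= !scale1r !(addrC (qYt x), addrC (qIt x)) !subrK !trmxK.
  by rewrite -unitfE -unitmxE -row_full_unit cyclic_vec_krylov.
apply/(PZ x Mx) => f Pf; have [p pE] := polyfun_deform x b^T u^T (Ppoly f Pf).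
suff p0 : p = 0 by rewrite -(deform0 x b^T u^T) pE p0 horner0.
apply: (poly_eq0_outside_roots (q := d)) => [|t dt].
  by apply: contraNneq d1 => ->; rewrite horner0.
have [My Oy] : Mpoint (deform x b^T u^T t) /\ open_cond (deform x b^T u^T t).
  by apply: deform_open => //; rewrite row_full_unit unitmxE unitfE dE.
by rewrite -pE; apply: (PZ _ My).1 (ZU _ My Oy) f Pf.
Qed.

End Deformation.

Theorem proposition3 (R : realType) (N M1 M2 : nat) (x : qdata R[i] N M1 M2) :
  Mpoint x ->
  (qJt x = 0 <-> in_closureM (fun y => open_cond y) x).
Proof. by move=> Mx; split; [exact: J0_closure | exact: closure_J0]. Qed.
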